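(* Let $T$ be any shortest-path tree of $G$ rooted at $s$, let $R$ be the forest obtained from $T$ by deleting the edges in $E(T)\cap E(D)$ (so $V(R)=V$), and let $\widetilde{E}$ be the set of edges $\{x,y\}\in E\setminus(E(T)\cup E(D))$ such that $x$ and $y$ lie in different connected components (subtrees) of $R$. Then an optimal outward path contains an edge of $\widetilde{E}$.
   Context: $G=(V,E,w)$ is a simple, connected, undirected graph with positive edge lengths, $s,t\in V$. A path is always simple; an $st$-path is a simple path from $s$ to $t$, and its length is the sum of its edge lengths. $D$ is the subgraph formed by the union of all shortest $st$-paths of $G$. An optimal outward path is an $st$-path of minimum length among all $st$-paths containing at least one edge of $E\setminus E(D)$. *)

(* A finite simple undirected weighted graph G on vertex type V
   is given by a symmetric irreflexive relation g : rel V and edge lengths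
   w : V -> V -> R (symmetric, positive on edges).  An (undirected) edge {x,y}
   is represented by the two-element set [set x; y] : {set V}. *)
From HB Require Import structures.
From mathcomp Require Import all_boot all_order all_algebra.
Set Implicit Arguments. Unset Strict Implicit. Unset Printing Implicit Defensive.
Import Order.TTheory GRing.Theory Num.Theory.
Local Open Scope ring_scope.

Section Defs.
Variables (R : realDomainType) (V : finType) (g : rel V) (w : V -> V -> R).

Definition is_edge (e : {set V}) : Prop := exists x y, g x y /\ e = [set x; y].

(* simple path in G from a to b, given as the vertex list a :: p *)
Definition spath (a b : V) (p : seq V) : bool :=
  [&& path g a p, last a p == b & uniq (a :: p)].

Definition pedges (a : V) (p : seq V) : seq {set V} :=
  [seq [set e.1; e.2] | e <- zip (a :: p) p].

Definition plen (a : V) (p : seq V) : R :=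
  \sum_(e <- zip (a :: p) p) w e.1 e.2.

Definition shortest_path (a b : V) (p : seq V) : Prop :=
  spath a b p /\ forall q, spath a b q -> plen a p <= plen a q.

Definition connected_graph : Prop := forall u v, exists p, spath u v p.

Variables (s t : V).

(* e is an edge of D, the union of all shortest st-paths *)
Definition inD (e : {set V}) : Prop :=
  exists p, shortest_path s t p /\ e \in pedges s p.

Definition outward_path (p : seq V) : Prop :=
  spath s t p /\ exists e, e \in pedges s p /\ ~ inD e.

Definition optimal_outward_path (p : seq V) : Prop :=
  outward_path p /\ forall q, outward_path q -> plen s p <= plen s q.

Definition subpath (F : {set V} -> Prop) (a b : V) (p : seq V) : Prop :=
  spath a b p /\ forall e, e \in pedges a p -> F e.

Definition has_cycle (F : {set V} -> Prop) : Prop :=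
  exists x p, [/\ path g x p, uniq (x :: p), (2 <= size p)%N,
                 (forall e, e \in pedges x p -> F e) & F [set last x p; x]].

Definition spanning_tree (T : {set {set V}}) : Prop :=
  [/\ forall e, e \in T -> is_edge e,
      forall u v, exists p, subpath (fun e => e \in T) u v p
    & ~ has_cycle (fun e => e \in T)].

Definition sp_tree (T : {set {set V}}) : Prop :=
  spanning_tree T /\
  forall v p, subpath (fun e => e \in T) s v p -> shortest_path s v p.

Definition forestR (T : {set {set V}}) (e : {set V}) : Prop :=
  e \in T /\ ~ inD e.

Definition R_connected (T : {set {set V}}) (x y : V) : Prop :=
  exists p, subpath (forestR T) x y p.

Definition Etilde (T : {set {set V}}) (e : {set V}) : Prop :=
  exists x y, [/\ g x y, e = [set x; y], e \notin T, ~ inD e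
                & ~ R_connected T x y].

End Defs.

From HB Require Import structures.
From mathcomp Require Import all_boot all_order all_algebra.
From mathcomp Require Import lra zify.
From Stdlib Require Import Classical.
Set Implicit Arguments. Unset Strict Implicit. Unset Printing Implicit Defensive.
Import Order.TTheory GRing.Theory Num.Theory.
Local Open Scope ring_scope.

(* Call a vertex of D a D-vertex.  Two D-vertices x, y in the same component of R
   coincide.  Indeed, a path of R from x can never leave the tree path from s to x
   on its way to y: the first edge leaving it would start a tree path, hence a
   shortest path, to the D-vertex y, and such a path extends along a shortest
   st-path through y, so all its edges lie in D, whereas edges of R do not.  Thus y
   lies on the tree path to x and x on the tree path to y, impossible for x <> y as
   weights are positive.
   Now let p be an outward path avoiding Etilde: each edge of p lies in D or joins
   two vertices of one component of R.  Walking along p from s and remembering the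
   last D-vertex c met, each D-edge starts at c, while after an edge outside D the
   walk can only reach the next D-vertex inside the component of c, i.e. at c
   itself, which p has already visited.  So all edges of p lie in D. *)

Lemma seq_argmin (T : eqType) (d : Order.disp_t) (R : orderType d) (f : T -> R)
  (L : seq T) :
  L != [::] -> exists2 m, m \in L & forall l, l \in L -> (f m <= f l)%O.
Proof.
elim: L => [|a L IH] // _; case: (eqVneq L [::]) => [->|/IH [m mL minm]].
  by exists a => [|l]; rewrite ?mem_seq1 // => /eqP ->.
have [fam|fma] := leP (f a) (f m).
  exists a => [|l]; first exact: mem_head.
  by rewrite in_cons => /predU1P[->//|/minm]; apply: le_trans.
exists m => [|l]; first by rewrite in_cons mL orbT.
by rewrite in_cons => /predU1P[->|/minm//]; apply: ltW.
Qed.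

Lemma uniq_mem_permutations_subsets (V : finType) (l : seq V) : uniq l ->
  l \in flatten [seq permutations (enum A) | A : {set V}].
Proof.
move=> ul; apply/flatten_mapP; exists [set x in l]; first by rewrite mem_enum.
rewrite mem_permutations uniq_perm ?enum_uniq // => x.
by rewrite mem_enum inE.
Qed.

Lemma split_last_mem (T : eqType) (P : pred T) x q : P x ->
  exists q1 q2, [/\ q = q1 ++ q2, P (last x q1) & ~~ has P q2].
Proof.
elim/last_ind: q => [|q y IH] Px; first by exists [::], [::].
have [Py|nPy] := boolP (P y).
  by exists (rcons q y), [::]; rewrite cats0 last_rcons.
have [q1 [q2 [-> Pq1 nPq2]]] := IH Px; exists q1, (rcons q2 y).
by rewrite rcons_cat has_rcons negb_or nPy.
Qed.

Section Paths.
Variables (R : realDomainType) (V : finType) (g : rel V) (w : V -> V -> R).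
Implicit Types (a b x y : V) (p q : seq V).

Lemma pedges_cons a x p : pedges a (x :: p) = [set a; x] :: pedges x p.
Proof. by []. Qed.

Lemma pedges_cat a p q : pedges a (p ++ q) = pedges a p ++ pedges (last a p) q.
Proof. by elim: p a => [|x p IH] a //=; rewrite !pedges_cons IH. Qed.

Lemma pedges_zip a p u v : (u, v) \in zip (a :: p) p -> [set u; v] \in pedges a p.
Proof. exact: map_f. Qed.

Lemma pedges_mem_vertex a p e x : e \in pedges a p -> x \in e -> x \in a :: p.
Proof.
elim: p a => [|y p IH] a //; rewrite pedges_cons in_cons => /predU1P[-> /set2P|].
  by case=> ->; rewrite !in_cons eqxx ?orbT.
by move=> /IH /[apply] xp; rewrite in_cons xp orbT.
Qed.

Lemma plen_cons a x p : plen w a (x :: p) = w a x + plen w x p.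
Proof. by rewrite /plen /= big_cons. Qed.

Lemma plen_cat a p q : plen w a (p ++ q) = plen w a p + plen w (last a p) q.
Proof.
elim: p a => [|x p IH] a /=; first by rewrite /plen big_nil add0r.
by rewrite !plen_cons IH addrA.
Qed.

Lemma path_zip a p u v : path g a p -> (u, v) \in zip (a :: p) p -> g u v.
Proof.
elim: p a => [|x p IH] a //= /andP[gax gp].
by rewrite in_cons => /predU1P[[-> ->] //|]; apply: IH.
Qed.

Lemma spath_catl a b p q : spath g a b (p ++ q) -> spath g a (last a p) p.
Proof.
rewrite /spath eqxx cat_path -cat_cons cat_uniq.
by case/and3P=> /andP[-> _] _ /and3P[-> _ _].
Qed.

Lemma split_at_mem a z p : z \in a :: p ->
  exists p1 p2, p = p1 ++ p2 /\ last a p1 = z.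
Proof.
rewrite in_cons => /predU1P[->|/splitPr [p1 p2]]; first by exists [::], p.
by exists (rcons p1 z), p2; rewrite cat_rcons last_rcons.
Qed.

Lemma exists_shortest_path a b p :
  spath g a b p -> exists q, shortest_path g w a b q.
Proof.
move=> sp; set L := [seq q <- flatten [seq permutations (enum A) | A : {set V}]
                      | spath g a b q].
have inL q : spath g a b q -> q \in L.
  move=> sq; rewrite mem_filter sq uniq_mem_permutations_subsets //.
  by case/and3P: sq => _ _ /andP[].
have [|q qL minq] := @seq_argmin _ _ _ (plen w a) L.
  by apply/eqP => L0; have := inL _ sp; rewrite L0.
exists q; split; first by move: qL; rewrite mem_filter => /andP[].
by move=> q' /inL /minq.
Qed.

Section Subpaths.
Variable F : {set V} -> Prop.

Lemma subpath_catl a c p q : subpath g F a c (p ++ q) -> subpath g F a (last a p) p.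
Proof.
case=> /spath_catl sp Fp; split=> // e ep.
by apply: Fp; rewrite pedges_cat mem_cat ep.
Qed.

Lemma subpath_catr a c p q : subpath g F a c (p ++ q) -> subpath g F (last a p) c q.
Proof.
case=> /and3P[] /[!cat_path] /andP[_ gq] /[!last_cat] lq.
rewrite -cat_cons cat_uniq => /and3P[_ /hasPn npq uq] Fpq; split.
  by rewrite /spath gq lq /= uq andbT; apply: contraL (mem_last a p); apply: npq.
by move=> e eq; apply: Fpq; rewrite pedges_cat mem_cat eq orbT.
Qed.

Lemma subpath_cat a b c p q : subpath g F a b p -> subpath g F b c q ->
  ~~ has (mem (a :: p)) q -> subpath g F a c (p ++ q).
Proof.
case=> /and3P[gp /eqP lp up] Fp [/and3P[gq /eqP lq /andP[_ uq]] Fq] npq; split.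
  by rewrite /spath cat_path gp lp gq last_cat lp lq eqxx -cat_cons cat_uniq up npq.
by move=> e; rewrite pedges_cat mem_cat lp => /orP[/Fp|/Fq].
Qed.

End Subpaths.

Definition walk_in (F : {set V} -> Prop) x y : Prop :=
  exists q, [/\ path g x q, last x q = y & forall e, e \in pedges x q -> F e].

Section Walks.
Variable F : {set V} -> Prop.

Lemma walk_in_refl x : walk_in F x x.
Proof. by exists [::]. Qed.

Lemma walk_in_trans x y z : walk_in F x y -> walk_in F y z -> walk_in F x z.
Proof.
case=> [p [gp <- Fp]] [q [gq <- Fq]]; exists (p ++ q).
rewrite cat_path gp gq last_cat; split=> // e.
by rewrite pedges_cat mem_cat => /orP[/Fp|/Fq].
Qed.

Lemma walk_in_edge x y : g x y -> F [set x; y] -> walk_in F x y.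
Proof. by move=> gxy Fxy; exists [:: y]; rewrite /= gxy; split=> // e /predU1P[->|].
Qed.

Lemma walk_in_sym x y : symmetric g -> walk_in F x y -> walk_in F y x.
Proof.
move=> gsym [q [+ <- +]]; elim: q x => [|v q IH] x /=.
  by move=> *; apply: walk_in_refl.
case/andP=> gxv gq Fq; apply: walk_in_trans (IH _ gq _) _ => [e eq|].
  by apply: Fq; rewrite pedges_cons in_cons eq orbT.
by apply: walk_in_edge; rewrite 1?gsym // setUC; apply: Fq; rewrite mem_head.
Qed.

Lemma subpath_walk_in x y p : subpath g F x y p -> walk_in F x y.
Proof. by case=> /and3P[gp /eqP lp _] Fp; exists p. Qed.

End Walks.

Section PositiveWeights.
Hypothesis wpos : forall x y, g x y -> 0 < w x y.

Lemma plen_ge0 a p : path g a p -> 0 <= plen w a p.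
Proof.
elim: p a => [|x p IH] a /=; first by rewrite /plen big_nil.
case/andP=> gax gp; rewrite plen_cons.
by have := wpos gax; have := IH _ gp; lra.
Qed.

Lemma plen_gt0 a p : path g a p -> p != [::] -> 0 < plen w a p.
Proof.
case: p => [|x p] //= /andP[gax gp] _; rewrite plen_cons.
by have := wpos gax; have := plen_ge0 gp; lra.
Qed.

Lemma plen_prefix_lt a p q :
  path g a (p ++ q) -> q != [::] -> plen w a p < plen w a (p ++ q).
Proof.
rewrite cat_path plen_cat => /andP[_ gq] /(plen_gt0 gq); lra.
Qed.

Lemma shorten_walk a p : path g a p ->
  exists q, [/\ spath g a (last a p) q, plen w a q <= plen w a p,
    ~~ uniq (a :: p) -> plen w a q < plen w a p,
    {subset pedges a q <= pedges a p} & {subset q <= p}].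
Proof.
move: {2}(size p) (leqnn (size p)) => n; elim: n a p => [|n IH] a p.
  rewrite leqn0 => /nilP -> _; exists [::].
  by split=> //; rewrite /spath /= eqxx.
move=> sz gp; have [ap|nap] := boolP (a \in p).
  case/splitPr: ap gp sz => p1 p2.
  rewrite cat_path /= size_cat /= => /andP[gp1 /andP[ga gp2]] sz.
  have [|q [sq lq _ eq sub]] := IH a p2 _ gp2; first by lia.
  have loop_pos : 0 < plen w a (p1 ++ [:: a]).
    by apply: plen_gt0; [rewrite cat_path gp1 /= ga | case: (p1)].
  exists q; split.
  - by rewrite last_cat.
  - by rewrite -cat1s catA plen_cat last_cat /=; move: loop_pos; lra.
  - by rewrite -cat1s catA plen_cat last_cat /=; move: loop_pos; lra.
  - by move=> e /eq; rewrite pedges_cat pedges_cons !(mem_cat, in_cons) => ->;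
      rewrite !orbT.
  - by move=> y /sub; rewrite mem_cat in_cons => ->; rewrite !orbT.
case: p nap gp sz => [|x p] nap; first by exists [::]; rewrite /spath /= eqxx.
rewrite /= => /andP[gax gp] sz.
have [|q [sq lq ltq eq sub]] := IH x p _ gp; first by lia.
exists (x :: q); rewrite !plen_cons; split.
- move: sq; rewrite /spath /= gax => /and3P[-> -> ->]; rewrite !andbT.
  by apply: contra nap; rewrite !in_cons => /orP[->|/sub ->]; rewrite ?orbT.
- by move: lq; lra.
- by rewrite [uniq _]/= nap /= => /ltq; lra.
- by move=> e; rewrite !pedges_cons !in_cons => /predU1P[->|/eq ->];
    rewrite ?eqxx ?orbT.
- by move=> y; rewrite !in_cons => /predU1P[->|/sub ->]; rewrite ?eqxx ?orbT.
Qed.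

Lemma walk_in_subpath F x y : walk_in F x y -> exists q, subpath g F x y q.
Proof.
case=> p [gp <- Fp]; have [q [sq _ _ pq _]] := shorten_walk gp.
by exists q; split=> // e /pq /Fp.
Qed.

Lemma shortest_path_lt_spath a x y p q :
  spath g a x p -> y \in a :: p -> y != x -> shortest_path g w a y q ->
  plen w a q < plen w a p.
Proof.
move=> sp /split_at_mem [p1 [p2 [Ep ly]]] yx [_ minq]; subst p.
have lp : last a (p1 ++ p2) = x by case/and3P: sp => _ /eqP.
have sp1 : spath g a y p1 by rewrite -ly; apply: spath_catl sp.
have p2n : p2 != [::] by apply: contraNneq yx => p20; rewrite -lp p20 cats0 ly.
case/and3P: sp => gp _ _.
by have := minq _ sp1; have := plen_prefix_lt gp p2n; lra.
Qed.

Variables s t : V.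

Definition vertexD x := exists p, shortest_path g w s t p /\ x \in s :: p.

Lemma inD_vertexD e x : inD g w s t e -> x \in e -> vertexD x.
Proof. by case=> p [sp ep] xe; exists p; split=> //; apply: pedges_mem_vertex xe. Qed.

(* A shortest path to a vertex y of D continues along a shortest st-path through y:
   the concatenation cannot revisit a vertex, since cutting the loop would beat d(s,t). *)
Lemma shortest_path_to_vertexD_inD y p e :
  shortest_path g w s y p -> vertexD y -> e \in pedges s p -> inD g w s t e.
Proof.
move=> [/and3P[gp /eqP lp _] minp] [p0 [[sp0 minp0] yp0]] ep.
have [p1 [p2 [Ep0 ly]]] := split_at_mem yp0; subst p0.
have /and3P[+ /eqP lt _] := sp0; rewrite cat_path ly => /andP[_ gp2].
have sp1 : spath g s y p1 by rewrite -ly; apply: spath_catl sp0.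
have le_p0 : plen w s (p ++ p2) <= plen w s (p1 ++ p2).
  by rewrite !plen_cat lp ly; have := minp _ sp1; lra.
have gw : path g s (p ++ p2) by rewrite cat_path gp lp.
have lw : last s (p ++ p2) = t by rewrite last_cat lp -lt last_cat ly.
have uw : uniq (s :: p ++ p2).
  apply: contraT => nu; have [q [sq _ ltq _ _]] := shorten_walk gw.
  by rewrite lw in sq; have := minp0 _ sq; have := ltq nu; lra.
exists (p ++ p2); split; last by rewrite pedges_cat mem_cat ep.
split; first by rewrite /spath gw lw eqxx.
by move=> q /minp0; lra.
Qed.

Section ShortestPathTree.
Variable T : {set {set V}}.
Hypothesis spT : sp_tree g w s T.

Let inT e := e \in T.
Let forest := forestR g w s t T.

Lemma forest_path_to_vertexD_on_tree_path x y A q :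
  subpath g inT s x A -> subpath g forest x y q -> vertexD y -> y \in s :: A.
Proof.
move=> sA sq Dy; have lA : last s A = x by case: sA => /and3P[_ /eqP].
have xA : x \in s :: A by rewrite -lA mem_last.
have [q1 [q2 [Eq zA nq2A]]] := @split_last_mem _ (mem (s :: A)) x q xA.
set z := last x q1 in zA; subst q.
have {sq} sq2 : subpath g forest z y q2 := subpath_catr sq.
case: q2 => [|v q2] in sq2 nq2A *.
  by case: sq2 => /and3P[_ /eqP <- _].
have [A1 [A2 [EA lA1]]] := split_at_mem zA; subst A.
have sA1 : subpath g inT s z A1 by rewrite -lA1; apply: subpath_catl sA.
have sA1q2 : subpath g inT s y (A1 ++ v :: q2).
  apply: subpath_cat sA1 _ _.
    by case: sq2 => sq2 Fq2; split=> // e /Fq2 [].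
  apply: contra nq2A; apply: sub_has => u.
  by rewrite !inE mem_cat => /orP[->|->]; rewrite ?orbT.
have [_ /(_ _ _ sA1q2) shortA1q2] := spT.
have [_ /(_ [set z; v] (mem_head _ _)) [_ []]] := sq2.
apply: shortest_path_to_vertexD_inD shortA1q2 Dy _.
by rewrite pedges_cat mem_cat lA1 pedges_cons mem_head orbT.
Qed.

Hypothesis gsym : symmetric g.

Lemma forest_walk_vertexD_eq x y :
  vertexD x -> vertexD y -> walk_in forest x y -> x = y.
Proof.
move=> Dx Dy xy; apply/eqP/negPn/negP => neq_xy.
have [[_ treeT _] shortT] := spT.
have [[A sA] [B sB]] := (treeT s x, treeT s y).
have [q xq] := walk_in_subpath xy.
have [q' yq'] := walk_in_subpath (walk_in_sym gsym xy).
have yA := forest_path_to_vertexD_on_tree_path sA xq Dy.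
have xB := forest_path_to_vertexD_on_tree_path sB yq' Dx.
have neq_yx : y != x by rewrite eq_sym.
have := shortest_path_lt_spath (proj1 sB) xB neq_xy (shortT _ _ sA).
by have := shortest_path_lt_spath (proj1 sA) yA neq_yx (shortT _ _ sB); lra.
Qed.

Lemma forest_or_D_path_inD a c q : path g a q -> uniq (a :: q) ->
  vertexD (last a q) -> vertexD c -> c \notin q -> walk_in forest c a ->
  (forall u v, (u, v) \in zip (a :: q) q ->
     inD g w s t [set u; v] \/ walk_in forest u v) ->
  c = a /\ forall e, e \in pedges a q -> inD g w s t e.
Proof.
elim: q a c => [|x q IH] a c /=.
  by move=> _ _ Da Dc _ ca _; split=> //; apply: forest_walk_vertexD_eq.
move=> /andP[gax gq] /andP[_ uq] Dl Dc /[!in_cons] /norP[cx cq] ca edgeP.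
have edgeqP u v : (u, v) \in zip (x :: q) q ->
    inD g w s t [set u; v] \/ walk_in forest u v.
  by move=> uv; apply: edgeP; rewrite in_cons uv orbT.
case: (edgeP a x (mem_head _ _)) => [Dax|ax].
  have Da := inD_vertexD Dax (set21 a x); have Dx := inD_vertexD Dax (set22 a x).
  have [_ Dq] := IH x x gq uq Dl Dx (proj1 (andP uq)) (walk_in_refl _ _) edgeqP.
  split; first exact: forest_walk_vertexD_eq Dc Da ca.
  by move=> e; rewrite pedges_cons in_cons => /predU1P[->|/Dq].
(* p would have to come back to the already visited D-vertex c *)
by have [/eqP] := IH x c gq uq Dl Dc cq (walk_in_trans ca ax) edgeqP; rewrite (negbTE cx).
Qed.

Lemma outward_path_meets_Etilde p : outward_path g w s t p ->
  exists2 e, e \in pedges s p & Etilde g w s t T e.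
Proof.
case=> sp [e0 [e0p nDe0]]; apply: NNPP => noE.
have [p0 sp0] := exists_shortest_path sp.
have Ds : vertexD s by exists p0; rewrite mem_head.
have Dt : vertexD t.
  by exists p0; split=> //; case: sp0 => /and3P[_ /eqP <- _] _; apply: mem_last.
case/and3P: (sp) => gp /eqP lp up.
have [_ allD] : s = s /\ forall e, e \in pedges s p -> inD g w s t e.
  apply: (forest_or_D_path_inD gp up _ Ds (proj1 (andP up)) (walk_in_refl _ _)).
    by rewrite lp.
  move=> u v uv; have [Duv|nDuv] := classic (inD g w s t [set u; v]).
    by left.
  right.
  have guv := path_zip gp uv.
  have [uvT|nuvT] := boolP ([set u; v] \in T); first exact: walk_in_edge.
  have [[q sq]|nRuv] := classic (R_connected g w s t T u v).
    exact: subpath_walk_in sq.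
  by case: noE; exists [set u; v]; [apply: pedges_zip | exists u, v].
exact/nDe0/allD.
Qed.

End ShortestPathTree.
End PositiveWeights.
End Paths.

Theorem lemma12 (R : realDomainType) (V : finType) (g : rel V)
  (w : V -> V -> R) (s t : V) (T : {set {set V}}) (p : seq V) :
  symmetric g -> irreflexive g ->
  (forall x y, w x y = w y x) ->
  (forall x y, g x y -> 0 < w x y) ->
  connected_graph g ->
  sp_tree g w s T ->
  optimal_outward_path g w s t p ->
  exists2 e, e \in pedges s p & Etilde g w s t T e.
Proof.
move=> gsym _ _ wpos _ spT [outp _].
exact: outward_path_meets_Etilde outp.
Qed.
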